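(* Let $\langle P,\wedge,\vee,0,1,\circ\rangle$ be a universale such that $\circ$ is idempotent ($a\circ a=a$ for all $a\in P$) and the identity element of the monoid $\langle P,\circ\rangle$ equals the least element $0$ of the lattice. Then $\langle P,\wedge,\vee,0,1\rangle$ is a globale.
   Context: A universale is a structure $\langle P,\wedge,\vee,0,1,\circ\rangle$ such that: (1) $\langle P,\wedge,\vee\rangle$ is a complete lattice with least element $0$ and greatest element $1$; (2) $\langle P,\circ\rangle$ is a monoid with some identity element $0'$; (3) for every $b\in P$ and every $T\subseteq P$, $b\circ\bigwedge T=\bigwedge\{b\circ t\mid t\in T\}$ and $(\bigwedge T)\circ b=\bigwedge\{t\circ b\mid t\in T\}$. A globale is a complete lattice $\langle L,\wedge,\vee,0,1\rangle$ such that for all $w\in L$ and all $Z\subseteq L$, $w\vee\bigwedge Z=\bigwedge\{w\vee z\mid z\in Z\}$. *)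

Set Implicit Arguments.

Section Defs.
Variable P : Type.
Variable le : P -> P -> Prop.

Definition is_glb (S : P -> Prop) (x : P) : Prop :=
  (forall y, S y -> le x y) /\ (forall z, (forall y, S y -> le z y) -> le z x).
Definition is_lub (S : P -> Prop) (x : P) : Prop :=
  (forall y, S y -> le y x) /\ (forall z, (forall y, S y -> le y z) -> le x z).

Definition complete_lattice (meet join : P -> P -> P)
  (Inf Sup : (P -> Prop) -> P) (bot top : P) : Prop :=
  (forall x, le x x) /\
  (forall x y, le x y -> le y x -> x = y) /\
  (forall x y z, le x y -> le y z -> le x z) /\
  (forall x y, is_glb (fun t => t = x \/ t = y) (meet x y)) /\
  (forall x y, is_lub (fun t => t = x \/ t = y) (join x y)) /\
  (forall S, is_glb S (Inf S)) /\
  (forall S, is_lub S (Sup S)) /\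
  (forall x, le bot x) /\ (forall x, le x top).

Definition img (f : P -> P) (S : P -> Prop) : P -> Prop :=
  fun y => exists t, S t /\ y = f t.

Definition is_monoid (circ : P -> P -> P) (e : P) : Prop :=
  (forall a b c, circ a (circ b c) = circ (circ a b) c) /\
  (forall a, circ e a = a) /\ (forall a, circ a e = a).

Definition universale (meet join : P -> P -> P) (Inf Sup : (P -> Prop) -> P)
  (bot top : P) (circ : P -> P -> P) : Prop :=
  complete_lattice meet join Inf Sup bot top /\
  (exists e, is_monoid circ e) /\
  (forall b T, circ b (Inf T) = Inf (img (fun t => circ b t) T)) /\
  (forall b T, circ (Inf T) b = Inf (img (fun t => circ t b) T)).

Definition globale (meet join : P -> P -> P) (Inf Sup : (P -> Prop) -> P)
  (bot top : P) : Prop :=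
  complete_lattice meet join Inf Sup bot top /\
  (forall w Z, join w (Inf Z) = Inf (img (fun z => join w z) Z)).
End Defs.

From Stdlib Require Import Setoid.

(* An operation preserving all infima is monotone in each argument.  With
   identity [0] it dominates both arguments, since [a = a∘0 <= a∘b], and by
   idempotence [a∘b <= (a∨b)∘(a∨b) = a∨b]; hence [∘] is the join, and the
   infimum-distributivity of [∘] becomes that of [∨]. *)

Section InfPreservingOperation.

Variables (P : Type) (le : P -> P -> Prop) (meet join : P -> P -> P).
Variables (Inf Sup : (P -> Prop) -> P) (bot top : P) (circ : P -> P -> P).

Hypothesis lattice : complete_lattice le meet join Inf Sup bot top.
Hypothesis circ_InfL : forall b T, circ b (Inf T) = Inf (img (fun t => circ b t) T).
Hypothesis circ_InfR : forall b T, circ (Inf T) b = Inf (img (fun t => circ t b) T).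

Let le_refl : forall x, le x x := proj1 lattice.
Let le_anti : forall x y, le x y -> le y x -> x = y :=
  proj1 (proj2 lattice).
Let le_trans : forall x y z, le x y -> le y z -> le x z :=
  proj1 (proj2 (proj2 lattice)).
Let is_lub_join : forall x y, is_lub le (fun t => t = x \/ t = y) (join x y) :=
  proj1 (proj2 (proj2 (proj2 (proj2 lattice)))).
Let is_glb_Inf : forall S, is_glb le S (Inf S) :=
  proj1 (proj2 (proj2 (proj2 (proj2 (proj2 lattice))))).
Let le_bot : forall x, le bot x :=
  proj1 (proj2 (proj2 (proj2 (proj2 (proj2 (proj2 (proj2 lattice))))))).

Lemma Inf_pair_le (x y : P) : le x y -> Inf (fun t => t = x \/ t = y) = x.
Proof.
  intros Hxy; destruct (is_glb_Inf (fun t => t = x \/ t = y)) as [Hlow Hgreat].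
  apply le_anti.
  - apply Hlow; left; reflexivity.
  - apply Hgreat; intros t [-> | ->]; [apply le_refl | exact Hxy].
Qed.

Lemma circ_monoL (c x y : P) : le x y -> le (circ c x) (circ c y).
Proof.
  intros Hxy; rewrite <- (Inf_pair_le _ _ Hxy) at 1; rewrite circ_InfL.
  apply (proj1 (is_glb_Inf _)); exists y; split; [right|]; reflexivity.
Qed.

Lemma circ_monoR (c x y : P) : le x y -> le (circ x c) (circ y c).
Proof.
  intros Hxy; rewrite <- (Inf_pair_le _ _ Hxy) at 1; rewrite circ_InfR.
  apply (proj1 (is_glb_Inf _)); exists y; split; [right|]; reflexivity.
Qed.

Lemma circ_idem_unit_bot_join :
  (forall a, circ a a = a) -> is_monoid circ bot ->
  forall a b, circ a b = join a b.
Proof.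
  intros circ_idem [_ [circ_botl circ_botr]] a b.
  destruct (is_lub_join a b) as [Hup Hleast].
  apply le_anti.
  - apply le_trans with (circ (join a b) (join a b)); [|rewrite circ_idem; apply le_refl].
    apply le_trans with (circ a (join a b)).
    + apply circ_monoL, Hup; right; reflexivity.
    + apply circ_monoR, Hup; left; reflexivity.
  - apply Hleast; intros t [-> | ->].
    + rewrite <- (circ_botr a) at 1; apply circ_monoL, le_bot.
    + rewrite <- (circ_botl b) at 1; apply circ_monoR, le_bot.
Qed.

Lemma Inf_img_ext (f g : P -> P) (Z : P -> Prop) :
  (forall z, f z = g z) -> Inf (img f Z) = Inf (img g Z).
Proof.
  intros Hfg.
  assert (Hsub : forall f g, (forall z, f z = g z) -> le (Inf (img f Z)) (Inf (img g Z))).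
  { intros f' g' Hfg'; apply (proj2 (is_glb_Inf _)); intros y [t [Ht ->]].
    apply (proj1 (is_glb_Inf _)); exists t; split; [exact Ht | symmetry; apply Hfg']. }
  apply le_anti; apply Hsub; [exact Hfg | intros z; symmetry; apply Hfg].
Qed.

End InfPreservingOperation.

Theorem mainTheorem5 (P : Type) (le : P -> P -> Prop) (meet join : P -> P -> P)
  (Inf Sup : (P -> Prop) -> P) (bot top : P) (circ : P -> P -> P) :
  universale le meet join Inf Sup bot top circ ->
  (forall a, circ a a = a) ->
  is_monoid circ bot ->
  globale le meet join Inf Sup bot top.
Proof.
  intros [lattice [_ [circ_InfL circ_InfR]]] circ_idem circ_monoid.
  pose proof (circ_idem_unit_bot_join _ _ _ _ _ _ _ _ _
    lattice circ_InfL circ_InfR circ_idem circ_monoid) as circ_join.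
  split; [exact lattice|].
  intros w Z.
  rewrite <- circ_join, circ_InfL.
  apply (Inf_img_ext _ _ _ _ _ _ _ _ lattice), circ_join.
Qed.
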